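(* Let $A\in\mathbb{R}^{D\times D}$ be real symmetric and let $\hat A_1,\hat A_2,\dots$ be mutually independent random $D\times D$ matrices with $\mathbb{E}[\hat A_j]=A$ for all $j$. Define $\hat T_0=I$, $\hat T_1=\hat A_1$, and $\hat T_k=2\hat A_k\hat T_{k-1}-\hat T_{k-2}$ for $k\ge2$. Suppose there is a constant $\alpha$ such that $$4\,\mathbb{E}[\|\hat A_k\|^2]+2\,\mathbb{E}[\|\hat A_k\|]+1\le\alpha\qquad\text{for all }k\ge1.$$ Then for all $k\ge 0$, $$\mathbb{E}\big[\|\hat T_k\|_F^2\big]\le D\,\alpha^k.$$
   Context: For a $D\times D$ matrix $M$, $\|M\|$ denotes the spectral (operator) norm and $\|M\|_F=(\sum_{i,j}M_{ij}^2)^{1/2}$ the Frobenius norm. *)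

From HB Require Import structures.
From mathcomp Require Import all_boot all_order all_algebra.
From mathcomp Require Import all_classical all_reals all_analysis.
Set Implicit Arguments. Unset Strict Implicit. Unset Printing Implicit Defensive.
Import Order.TTheory GRing.Theory Num.Theory.
Local Open Scope classical_set_scope.
Local Open Scope ring_scope.

Section Defs.
Context {R : realType} {D : nat}.

Definition l2norm (v : 'cV[R]_D) : R := Num.sqrt (\sum_(i < D) v i 0 ^+ 2).

Definition opnorm (M : 'M[R]_D) : R :=
  sup [set l2norm (M *m v) | v in [set v : 'cV[R]_D | l2norm v <= 1]].

Definition frobnorm (M : 'M[R]_D) : R :=
  Num.sqrt (\sum_(i < D) \sum_(j < D) M i j ^+ 2).

(* Chebyshev-type recursion: chebp Ah k = (T_k, T_(k+1)) where
   T_0 = I, T_1 = Ah 1, T_k = 2 Ah k T_(k-1) - T_(k-2). *)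
Fixpoint chebp (Ah : nat -> 'M[R]_D) (k : nat) : 'M[R]_D * 'M[R]_D :=
  match k with
  | 0 => (1%:M, Ah 1%N)
  | k'.+1 => let: (a, b) := chebp Ah k' in (b, 2 *: (Ah k'.+2 *m b) - a)
  end.

Definition cheb (Ah : nat -> 'M[R]_D) (k : nat) : 'M[R]_D := (chebp Ah k).1.

Definition mx_sigma {d} {T : measurableType d} (X : T -> 'M[R]_D) : set (set T) :=
  <<s [set E | exists i j, preimage_set_system setT (fun t => X t i j) measurable E] >>.

Definition mutually_independent {d} {T : measurableType d}
    (P : probability T R) (I : set nat) (X : nat -> T -> 'M[R]_D) : Prop :=
  forall (s : seq nat) (E : nat -> set T),
    uniq s -> (forall j, j \in s -> I j) ->
    (forall j, j \in s -> mx_sigma (X j) (E j)) ->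
    P (\bigcap_(j in [set j | j \in s]) E j) = (\prod_(j <- s) fine (P (E j)))%:E.

End Defs.

From HB Require Import structures.
From mathcomp Require Import all_boot all_order all_algebra.
From mathcomp Require Import all_classical all_reals all_analysis.
From mathcomp Require Import ring lra measurable_realfun.
Import Order.TTheory GRing.Theory Num.Theory.
Local Open Scope classical_set_scope.
Local Open Scope ring_scope.

(* With a := ‖Â_k‖, the recursion T_k = 2 Â_k T_(k-1) - T_(k-2) and the bound
   ‖M B‖_F <= ‖M‖ ‖B‖_F give, after AM-GM on the cross term,
     ‖T_k‖_F^2 <= (4 a^2 + 2 a) ‖T_(k-1)‖_F^2 + (2 a + 1) ‖T_(k-2)‖_F^2.
   Since Â_k is independent of Â_1, ..., Â_(k-1), which determine T_(k-1) and T_(k-2), the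
   expectations of the products factorize, and the moment hypothesis turns the inequality into
   e_k <= (alpha - 1) e_(k-1) + alpha e_(k-2) for e_k := E ‖T_k‖_F^2; induction from e_0 = D and
   e_1 <= D E ‖Â_1‖^2 <= D alpha gives e_k <= D alpha^k.  The operator norm is measurable because
   it is a supremum over countably many grid vectors. *)

Section Norms.
Context {R : realType} {D : nat}.
Implicit Types (v : 'cV[R]_D) (M B C U : 'M[R]_D).

Definition sqnorm v := \sum_(i < D) v i 0 ^+ 2.

Lemma sqnorm_ge0 v : 0 <= sqnorm v.
Proof. by apply: sumr_ge0 => i _; exact: sqr_ge0. Qed.

Lemma l2norm_ge0 v : 0 <= l2norm v.
Proof. exact: sqrtr_ge0. Qed.

Lemma sqr_l2norm v : l2norm v ^+ 2 = sqnorm v.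
Proof. by rewrite sqr_sqrtr // sqnorm_ge0. Qed.

Lemma l2norm_le1 v : (l2norm v <= 1) = (sqnorm v <= 1).
Proof. by rewrite /l2norm -{1}sqrtr1 ler_sqrt. Qed.

Lemma l2norm0 : l2norm (0 : 'cV[R]_D) = 0.
Proof. by rewrite /l2norm big1 ?sqrtr0 // => i _; rewrite mxE expr0n. Qed.

Lemma sqnormZ c v : sqnorm (c *: v) = c ^+ 2 * sqnorm v.
Proof. by rewrite /sqnorm mulr_sumr; apply: eq_bigr => i _; rewrite mxE exprMn. Qed.

Lemma l2normZ c v : l2norm (c *: v) = `|c| * l2norm v.
Proof. by rewrite [LHS]/l2norm -/(sqnorm _) sqnormZ sqrtrM ?sqr_ge0 // sqrtr_sqr. Qed.

Lemma sqnorm_eq0 v : sqnorm v = 0 -> v = 0.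
Proof.
move/eqP; rewrite psumr_eq0 => [/allP v0|i _]; last exact: sqr_ge0.
apply/matrixP => i j; rewrite (ord1 j) mxE.
by apply/eqP; rewrite -sqrf_eq0; apply: (implyP (v0 i (mem_index_enum _))).
Qed.

Lemma abs_coord_le1 v : l2norm v <= 1 -> forall j, `|v j 0| <= 1.
Proof.
rewrite l2norm_le1 => v1 j.
have vj : v j 0 ^+ 2 <= sqnorm v.
  by rewrite /sqnorm (bigD1 j) //= lerDl; apply: sumr_ge0 => i _; exact: sqr_ge0.
rewrite ler_norml; apply/andP; split; nra.
Qed.

Definition abs_row_sum M i := \sum_(j < D) `|M i j|.

Definition opnorm_bound M := Num.sqrt (\sum_(i < D) abs_row_sum M i ^+ 2).

Lemma abs_mulmx_coord_le M v : l2norm v <= 1 ->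
  forall i, `|(M *m v) i 0| <= abs_row_sum M i.
Proof.
move=> v1 i; rewrite mxE; apply: le_trans (ler_norm_sum _ _ _) _.
apply: ler_sum => j _; rewrite normrM.
by apply: ler_piMr => //; exact: abs_coord_le1.
Qed.

Lemma l2norm_mulmx_le_bound M v : l2norm v <= 1 -> l2norm (M *m v) <= opnorm_bound M.
Proof.
move=> v1; rewrite ler_sqrt; last by apply: sumr_ge0 => i _; exact: sqr_ge0.
apply: ler_sum => i _; rewrite -real_normK ?num_real //.
have := abs_mulmx_coord_le M v v1 i; have := normr_ge0 ((M *m v) i 0); nra.
Qed.

Definition opnorm_set M :=
  [set l2norm (M *m v) | v in [set v : 'cV[R]_D | l2norm v <= 1]].

Lemma opnorm_set_ubound M : has_ubound (opnorm_set M).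
Proof. by exists (opnorm_bound M) => _ [v v1 <-]; exact: l2norm_mulmx_le_bound. Qed.

Lemma opnorm_set0 M : opnorm_set M 0.
Proof. by exists 0; rewrite /= ?mulmx0 l2norm0 // ler01. Qed.

Lemma l2norm_mulmx_le_opnorm M v : l2norm v <= 1 -> l2norm (M *m v) <= opnorm M.
Proof. by move=> v1; apply: ub_le_sup; [exact: opnorm_set_ubound | exists v]. Qed.

Lemma opnorm_ge0 M : 0 <= opnorm M.
Proof. by have := l2norm_mulmx_le_opnorm M 0; rewrite mulmx0 l2norm0 ler01; apply. Qed.

Lemma sqnorm_mulmx_le M v : sqnorm (M *m v) <= opnorm M ^+ 2 * sqnorm v.
Proof.
have [/sqnorm_eq0 ->|v0] := eqVneq (sqnorm v) 0.
  by rewrite mulmx0 /sqnorm !big1 ?mulr0 // => i _; rewrite mxE expr0n.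
have lv_gt0 : 0 < l2norm v by rewrite sqrtr_gt0 lt_def v0 sqnorm_ge0.
have unit_v : l2norm ((l2norm v)^-1 *: v) <= 1.
  by rewrite l2norm_le1 sqnormZ -sqr_l2norm exprVn mulVf // sqrf_eq0 gt_eqF.
have := l2norm_mulmx_le_opnorm M _ unit_v; rewrite -scalemxAr.
rewrite l2normZ ger0_norm; last by rewrite invr_ge0 ltW.
rewrite [_ * l2norm _]mulrC (ler_pdivrMr _ _ lv_gt0) => Mv_le.
rewrite -!sqr_l2norm -exprMn lerXn2r ?nnegrE ?l2norm_ge0 //.
by rewrite mulr_ge0 ?opnorm_ge0 ?l2norm_ge0.
Qed.

Definition sqfrob M := \sum_(i < D) \sum_(j < D) M i j ^+ 2.

Lemma sqfrob_ge0 M : 0 <= sqfrob M.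
Proof. by apply: sumr_ge0 => i _; apply: sumr_ge0 => j _; exact: sqr_ge0. Qed.

Lemma sqr_frobnorm M : frobnorm M ^+ 2 = sqfrob M.
Proof. by rewrite sqr_sqrtr // sqfrob_ge0. Qed.

Lemma sqfrob_col M : sqfrob M = \sum_(j < D) sqnorm (col j M).
Proof.
rewrite /sqfrob exchange_big; apply: eq_bigr => j _; apply: eq_bigr => i _.
by rewrite mxE.
Qed.

Lemma sqfrob_mulmx_le M B : sqfrob (M *m B) <= opnorm M ^+ 2 * sqfrob B.
Proof.
rewrite !sqfrob_col mulr_sumr; apply: ler_sum => j _.
by rewrite !colE -mulmxA; exact: sqnorm_mulmx_le.
Qed.

Lemma sqfrob_eq0 M : sqfrob M = 0 -> M = 0.
Proof.
rewrite sqfrob_col => /eqP; rewrite psumr_eq0 => [/allP M0|j _]; last exact: sqnorm_ge0.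
apply/matrixP => i j; have /eqP/sqnorm_eq0/matrixP/(_ i 0) := implyP (M0 j (mem_index_enum _)) isT.
by rewrite !mxE.
Qed.

Lemma sqfrobN M : sqfrob (- M) = sqfrob M.
Proof. by apply: eq_bigr => i _; apply: eq_bigr => j _; rewrite mxE sqrrN. Qed.

Lemma sqfrob1 : sqfrob (1%:M : 'M[R]_D) = D%:R.
Proof.
rewrite /sqfrob (eq_bigr (fun _ => 1)) ?sumr_const ?card_ord // => i _.
rewrite (bigD1 i) //= big1 ?addr0 => [|j /negbTE ji]; first by rewrite mxE eqxx expr1n.
by rewrite mxE eq_sym ji expr0n.
Qed.

Lemma sqfrob_le_opnorm M : sqfrob M <= D%:R * opnorm M ^+ 2.
Proof. by have := sqfrob_mulmx_le M 1%:M; rewrite mulmx1 sqfrob1 mulrC. Qed.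

Lemma sqfrob_sub2_le U C (a : R) : 0 < a ->
  sqfrob (2 *: U - C) <= (4 + 2 / a) * sqfrob U + (2 * a + 1) * sqfrob C.
Proof.
move=> a_gt0; rewrite /sqfrob !mulr_sumr -big_split /=; apply: ler_sum => i _.
rewrite !mulr_sumr -big_split /=; apply: ler_sum => j _; rewrite !mxE.
(* AM-GM: [- 4 u c <= 2 u^2 / a + 2 a c^2] *)
have amgm : 0 <= U i j ^+ 2 / a + 2 * U i j * C i j + a * C i j ^+ 2.
  have -> : U i j ^+ 2 / a + 2 * U i j * C i j + a * C i j ^+ 2 =
      (U i j + a * C i j) ^+ 2 / a by field; rewrite gt_eqF.
  by rewrite divr_ge0 ?sqr_ge0 ?ltW.
have -> : (4 + 2 / a) * U i j ^+ 2 = 4 * U i j ^+ 2 + 2 * (U i j ^+ 2 / a) by ring.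
nra.
Qed.

Lemma sqfrob_cheb_step M B C :
  sqfrob (2 *: (M *m B) - C) <=
  (4 * opnorm M ^+ 2 + 2 * opnorm M) * sqfrob B + (2 * opnorm M + 1) * sqfrob C.
Proof.
have MB_le := sqfrob_mulmx_le M B; set a := opnorm M in MB_le *.
have [a0|a_neq0] := eqVneq a 0.
  move: MB_le; rewrite a0 expr0n mul0r => MB_le.
  have -> : M *m B = 0 by apply: sqfrob_eq0; apply/eqP; rewrite eq_le MB_le sqfrob_ge0.
  by rewrite scaler0 sub0r sqfrobN !(mulr0, addr0, add0r, mul0r, mul1r).
have a_gt0 : 0 < a by rewrite lt_def a_neq0 opnorm_ge0.
apply: (le_trans (sqfrob_sub2_le (M *m B) C a a_gt0)); rewrite lerD2r.
apply: le_trans (ler_wpM2l _ MB_le) _; first by rewrite addr_ge0 ?divr_ge0 ?ltW.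
rewrite mulrA ler_wpM2r ?sqfrob_ge0 //.
by have -> : (4 + 2 / a) * a ^+ 2 = 4 * a ^+ 2 + 2 * a by field.
Qed.

End Norms.

Section Chebyshev.
Context {R : realType} {D : nat}.
Variable Ah : nat -> 'M[R]_D.

Lemma cheb0 : cheb Ah 0 = 1%:M. Proof. by []. Qed.

Lemma cheb1 : cheb Ah 1 = Ah 1%N. Proof. by []. Qed.

Lemma chebpS n :
  chebp Ah n.+1 = ((chebp Ah n).2, 2 *: (Ah n.+2 *m (chebp Ah n).2) - (chebp Ah n).1).
Proof. by rewrite /=; case: (chebp Ah n). Qed.

Lemma chebSS n : cheb Ah n.+2 = 2 *: (Ah n.+2 *m cheb Ah n.+1) - cheb Ah n.
Proof. by rewrite /cheb !chebpS. Qed.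

End Chebyshev.

Section MatrixMeasurable.
Context {d} {T : measurableType d} {R : realType} {D : nat}.
Implicit Types F G : T -> 'M[R]_D.

Definition mx_measurable F := forall i j, measurable_fun setT (fun t => F t i j).

Lemma mx_measurable_cst M : mx_measurable (fun _ => M).
Proof. by move=> i j; exact: measurable_cst. Qed.

Lemma mx_measurable_mul F G :
  mx_measurable F -> mx_measurable G -> mx_measurable (fun t => F t *m G t).
Proof.
move=> mF mG i j; under eq_fun do rewrite mxE.
by apply: measurable_sum => k; apply: measurable_funM.
Qed.

Lemma mx_measurable_sub F G :
  mx_measurable F -> mx_measurable G -> mx_measurable (fun t => F t - G t).
Proof. by move=> mF mG i j; under eq_fun do rewrite !mxE; exact: measurable_funB. Qed.

Lemma mx_measurable_scale c F : mx_measurable F -> mx_measurable (fun t => c *: F t).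
Proof.
by move=> mF i j; under eq_fun do rewrite mxE; apply: measurable_funM => //; exact: measurable_cst.
Qed.

Lemma measurable_sqfrob F : mx_measurable F -> measurable_fun setT (fun t => sqfrob (F t)).
Proof.
move=> mF; apply: measurable_sum => i; apply: measurable_sum => j.
exact: measurable_funX.
Qed.

Lemma mx_measurable_cheb (Ah : nat -> T -> 'M[R]_D) n :
  (forall j, (0 < j <= n)%N -> mx_measurable (Ah j)) ->
  mx_measurable (fun t => cheb (fun j => Ah j t) n).
Proof.
elim/ltn_ind: n => -[|[|n]] IH mAh; first exact: mx_measurable_cst; first exact: mAh.
have mAh_le k : (k < n.+2)%N -> forall j, (0 < j <= k)%N -> mx_measurable (Ah j).
  by move=> kn j /andP[j0 jk]; apply: mAh; rewrite j0 (leq_trans jk) // ltnW.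
have mT0 : mx_measurable (fun t => cheb (fun j => Ah j t) n).
  by apply: IH => //; exact: mAh_le.
have mT1 : mx_measurable (fun t => cheb (fun j => Ah j t) n.+1).
  by apply: IH => //; exact: mAh_le.
under eq_fun do rewrite chebSS.
apply: mx_measurable_sub mT0; apply: mx_measurable_scale.
by apply: mx_measurable_mul mT1; apply: mAh; rewrite /= leqnn.
Qed.

End MatrixMeasurable.

Section MeasurableOpnorm.
Context {R : realType} {D : nat}.
Implicit Types (v : 'cV[R]_D) (M : 'M[R]_D).

(* [opnorm M] is the supremum of [|M w|] over the countably many grid vectors
   [w = z / (N + 1)], [z] integral, with [|w| <= 1], enumerated through [unpickle]. *)
Definition grid_vec (zN : 'cV[int]_D * nat) : 'cV[R]_D :=
  (zN.2.+1%:R)^-1 *: map_mx intr zN.1.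

Definition opnorm_probe n M : R :=
  if unpickle n is Some zN then
    if l2norm (grid_vec zN) <= 1 then l2norm (M *m grid_vec zN) else 0
  else 0.

Lemma opnorm_set_probe n M : opnorm_set M (opnorm_probe n M).
Proof.
rewrite /opnorm_probe; case: (unpickle n) => [zN|]; last exact: opnorm_set0.
by case: ifPn => zN1; [exists (grid_vec zN) | exact: opnorm_set0].
Qed.

Definition round0 (x : R) : int := if 0 <= x then Num.floor x else - Num.floor (- x).

Lemma abs_round0_le x : `|(round0 x)%:~R| <= `|x| :> R.
Proof.
have floor_abs y : 0 <= y -> `|(Num.floor y)%:~R| <= `|y| :> R.
  by move=> y0; rewrite !ger0_norm ?floor_le // ler0z floor_ge0.
rewrite /round0; case: ifPn => x0; first exact: floor_abs.
by rewrite intrN normrN -(normrN x) floor_abs // oppr_ge0 ltW // ltNge.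
Qed.

Lemma abs_sub_round0_le1 x : `|x - (round0 x)%:~R| <= 1 :> R.
Proof.
rewrite /round0; case: ifPn => x0.
  have := floor_le x; have := floorD1_gt x; rewrite intrD => lt_x le_x.
  by rewrite ger0_norm ?subr_ge0 //; lra.
have := floor_le (- x); have := floorD1_gt (- x); rewrite intrD => lt_x le_x.
by rewrite intrN opprK ler_norml; apply/andP; split; lra.
Qed.

Definition grid_round v N := (\col_j round0 (v j 0 * N.+1%:R), N).

Lemma abs_grid_round_le v N j : `|grid_vec (grid_round v N) j 0| <= `|v j 0|.
Proof.
rewrite !mxE normrM ger0_norm ?invr_ge0 // ler_pdivrMl ?ltr0Sn //.
by apply: le_trans (abs_round0_le _) _; rewrite normrM (ger0_norm (ler0n _ N.+1)) mulrC.
Qed.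

Lemma abs_sub_grid_round_le v N j :
  `|v j 0 - grid_vec (grid_round v N) j 0| <= (N.+1%:R)^-1.
Proof.
have N_gt0 : (0 : R) < N.+1%:R by rewrite ltr0Sn.
have -> : v j 0 - grid_vec (grid_round v N) j 0 =
    (N.+1%:R)^-1 * (v j 0 * N.+1%:R - (round0 (v j 0 * N.+1%:R))%:~R).
  by rewrite !mxE; field; rewrite gt_eqF.
rewrite normrM ger0_norm; last by rewrite invr_ge0 ltW.
by apply: ler_piMr; [rewrite invr_ge0 ltW | exact: abs_sub_round0_le1].
Qed.

Lemma l2norm_grid_round_le1 v N : l2norm v <= 1 -> l2norm (grid_vec (grid_round v N)) <= 1.
Proof.
rewrite !l2norm_le1; apply: le_trans; apply: ler_sum => j _.
rewrite -[leLHS]real_normK ?num_real // -[leRHS]real_normK ?num_real //.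
by rewrite lerXn2r ?nnegrE ?abs_grid_round_le.
Qed.

Lemma opnorm_probe_grid_round v N M : l2norm v <= 1 ->
  opnorm_probe (pickle (grid_round v N)) M = l2norm (M *m grid_vec (grid_round v N)).
Proof. by move=> v1; rewrite /opnorm_probe pickleK l2norm_grid_round_le1. Qed.

Lemma sqnorm_mulmx_grid_round_le v N M : l2norm v <= 1 ->
  sqnorm (M *m v) <=
  sqnorm (M *m grid_vec (grid_round v N)) + 2 * (\sum_i abs_row_sum M i ^+ 2) / N.+1%:R.
Proof.
move=> v1; set w := grid_vec _.
have w1 : l2norm w <= 1 by exact: l2norm_grid_round_le1.
rewrite -mulrA mulr_suml mulr_sumr /sqnorm -big_split /=; apply: ler_sum => i _.
have Mv_le := abs_mulmx_coord_le M v v1 i; have Mw_le := abs_mulmx_coord_le M w w1 i.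
have Mvw_le : `|(M *m v) i 0 - (M *m w) i 0| <= abs_row_sum M i / N.+1%:R.
  rewrite !mxE -sumrB mulr_suml; apply: le_trans (ler_norm_sum _ _ _) _.
  apply: ler_sum => j _; rewrite -mulrBr normrM ler_wpM2l //.
  exact: abs_sub_grid_round_le.
set b := (M *m v) i 0 in Mv_le Mvw_le *; set a := (M *m w) i 0 in Mw_le Mvw_le *.
set r := abs_row_sum M i in Mv_le Mw_le Mvw_le *.
have -> : b ^+ 2 = a ^+ 2 + (b - a) * (b + a) by ring.
rewrite lerD2l; apply: le_trans (ler_norm _) _; rewrite normrM.
apply: le_trans (ler_pM _ _ Mvw_le (ler_normD _ _)) _ => //.
apply: le_trans (ler_wpM2l _ (lerD Mv_le Mw_le)) _; first by rewrite divr_ge0 ?sumr_ge0.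
by rewrite le_eqVlt; apply/orP; left; apply/eqP; ring.
Qed.

Lemma le_of_sqr_le_add_div (x y c : R) : 0 <= x -> 0 <= y ->
  (forall N : nat, x ^+ 2 <= y ^+ 2 + c / N.+1%:R) -> x <= y.
Proof.
move=> x0 y0 xy; rewrite leNgt; apply/negP => yx.
have gap_gt0 : 0 < x ^+ 2 - y ^+ 2 by nra.
have c0 : 0 <= c by have := xy 0%N; rewrite divr1; nra.
have := archi_boundP (divr_ge0 c0 (ltW gap_gt0)); set N := Num.Def.archi_bound _ => NP.
have N_gt0 : (0 : R) < N.+1%:R by rewrite ltr0Sn.
have : c / N.+1%:R < x ^+ 2 - y ^+ 2.
  rewrite ltr_pdivrMr // -ltr_pdivrMl // mulrC; apply: lt_trans NP _.
  by rewrite ltr_nat.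
have := xy N; set q := c / _; set X := x ^+ 2; set Y := y ^+ 2; lra.
Qed.

Lemma opnorm_sups M : opnorm M = sups (fun n => opnorm_probe n M) 0.
Proof.
rewrite /sups /=; apply/eqP; rewrite eq_le; apply/andP; split; last first.
  apply: ge_sup; first by exists (opnorm_probe 0 M), 0%N.
  by move=> _ [n _ <-]; apply: ub_le_sup; [exact: opnorm_set_ubound | exact: opnorm_set_probe].
set s := sup _.
have probe_le_s n : opnorm_probe n M <= s.
  apply: ub_le_sup; last by exists n.
  by exists (opnorm_bound M) => _ [m _ <-]; have [v v1 <-] := opnorm_set_probe m M;
    exact: l2norm_mulmx_le_bound.
have s0 : 0 <= s.
  by apply: le_trans (probe_le_s 0%N); have [v v1 <-] := opnorm_set_probe 0 M; exact: l2norm_ge0.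
apply: ge_sup; first by exists 0; exact: opnorm_set0.
move=> _ [v v1 <-]; apply: (le_of_sqr_le_add_div _ _ (2 * \sum_i abs_row_sum M i ^+ 2)).
- exact: l2norm_ge0.
- exact: s0.
move=> N; rewrite sqr_l2norm; apply: le_trans (sqnorm_mulmx_grid_round_le v N M v1) _.
rewrite lerD2r -sqr_l2norm lerXn2r ?nnegrE ?l2norm_ge0 //.
by rewrite -opnorm_probe_grid_round.
Qed.

Lemma measurable_opnorm {d} {T : measurableType d} (F : T -> 'M[R]_D) :
  mx_measurable F -> measurable_fun setT (fun t => opnorm (F t)).
Proof.
move=> mF; under eq_fun do rewrite opnorm_sups.
apply: (@measurable_realfun.measurable_fun_sups _ _ _ _ (fun n t => opnorm_probe n (F t)) 0%N).
  move=> t _; exists (opnorm_bound (F t)) => _ [n _ <-].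
  by have [v v1 <-] := opnorm_set_probe n (F t); exact: l2norm_mulmx_le_bound.
move=> n; rewrite /opnorm_probe; case: (unpickle n) => [zN|]; last exact: measurable_cst.
case: (l2norm (grid_vec zN) <= 1); last exact: measurable_cst.
change (measurable_fun setT (Num.sqrt \o (fun t => sqnorm (F t *m grid_vec zN)))).
apply: measurableT_comp; first by apply: continuous_measurable_fun; exact: sqrt_continuous.
apply: measurable_sum => i; apply: measurable_funX; under eq_fun do rewrite mxE.
by apply: measurable_sum => j; apply: measurable_funM => //; exact: measurable_cst.
Qed.

End MeasurableOpnorm.

Section IndependentIntegral.
Local Open Scope ereal_scope.
Context d (T : measurableType d) (R : realType) (P : probability T R).
Variables G1 G2 : set (set T).
Hypothesis G1_measurable : <<s G1 >> `<=` measurable.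
Hypothesis G2_measurable : <<s G2 >> `<=` measurable.
Hypothesis G12_indep :
  forall A B, <<s G1 >> A -> <<s G2 >> B -> P (A `&` B) = P A * P B.

Local Notation T1 := (g_sigma_algebraType G1).
Local Notation T2 := (g_sigma_algebraType G2).

Let measurable_to1 : measurable_fun setT (fun t : T => t : T1).
Proof. by move=> _ Y mY; rewrite setTI; exact: G1_measurable. Qed.

Let measurable_to2 : measurable_fun setT (fun t : T => t : T2).
Proof. by move=> _ Y mY; rewrite setTI; exact: G2_measurable. Qed.

Let to1 : {mfun T >-> T1} :=
  HB.pack (fun t : T => t : T1) (isMeasurableFun.Build _ _ _ _ _ measurable_to1).
Let to2 : {mfun T >-> T2} :=
  HB.pack (fun t : T => t : T2) (isMeasurableFun.Build _ _ _ _ _ measurable_to2).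

Let measurable_diag : measurable_fun setT (fun t : T => (t : T1, t : T2)).
Proof. exact: measurable_fun_pair. Qed.

Let diag : {mfun T >-> (T1 * T2)%type} :=
  HB.pack (fun t : T => (t : T1, t : T2)) (isMeasurableFun.Build _ _ _ _ _ measurable_diag).

(* Independence says that the joint law of [(t, t)] is the product of the marginals. *)
Let joint_law_product X : measurable X ->
  (distribution P to1 \x distribution P to2) X = distribution P diag X.
Proof. by apply: product_measure_unique => A B mA mB; exact: G12_indep. Qed.

Lemma ge0_integralM_indep (X : T1 -> \bar R) (Y : T2 -> \bar R) :
  measurable_fun setT X -> measurable_fun setT Y ->
  (forall x, 0 <= X x) -> (forall y, 0 <= Y y) ->
  \int[P]_t (X t * Y t) = \int[P]_t X t * \int[P]_t Y t.
Proof.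
move=> mX mY X0 Y0.
pose f := fun z : T1 * T2 => X z.1 * Y z.2.
have mf : measurable_fun setT f.
  by apply: emeasurable_funM; [exact: measurableT_comp mX measurable_fst |
                               exact: measurableT_comp mY measurable_snd].
have -> : \int[P]_t (X t * Y t) = \int[distribution P diag]_z f z.
  by rewrite ge0_integral_distribution // => z; rewrite mule_ge0.
rewrite -(eq_measure_integral _ (fun A mA _ => joint_law_product A mA)).
rewrite fubini_tonelli1 //; last by move=> z; rewrite mule_ge0.
rewrite /fubini_F /f /=; under eq_integral do rewrite ge0_integralZl //.
rewrite ge0_integralZr ?integral_ge0 //.
by rewrite !ge0_integral_distribution.
Qed.

End IndependentIntegral.

Lemma indep_event_sigma d (T : measurableType d) (R : realType) (P : probability T R)
    (A : set T) (G : set (set T)) :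
  measurable A -> G `<=` measurable -> setI_closed G -> G setT ->
  (forall B, G B -> P (A `&` B) = (P A * P B)%E) ->
  forall B, <<s G >> B -> P (A `&` B) = (P A * P B)%E.
Proof.
move=> mA mG IG GT AG.
have PA_fin : P A \is a fin_num by exact: fin_num_measure.
pose PA := NngNum (fine_ge0 (measure_ge0 P A)).
have PAE B : mscale PA P B = (P A * P B)%E by rewrite /mscale /= fineK.
move=> B GB; rewrite -PAE setIC -/(mrestr P mA B).
apply: (g_sigma_algebra_measure_unique G mG (fun=> setT)) => //.
- by rewrite bigcup_const.
- by move=> C GC /=; rewrite /mrestr setIC PAE AG.
- by move=> _ /=; rewrite /mrestr setTI (le_lt_trans (probability_le1 _ _)) ?ltry.
Qed.

Section MatrixIndependence.
Local Open Scope ereal_scope.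
Context {R : realType} {D : nat} {d} {T : measurableType d}.
Variables (P : probability T R) (Ahat : nat -> T -> 'M[R]_D).
Hypothesis Ahat_indep : mutually_independent P [set j | (0 < j)%N] Ahat.
Hypothesis Ahat_measurable : forall j, (0 < j)%N -> mx_measurable (Ahat j).

(* [mx_sigma X] is by definition [<<s mx_generators X >>]. *)
Definition mx_generators (X : T -> 'M[R]_D) : set (set T) :=
  [set E | exists i j, preimage_set_system setT (fun t => X t i j) measurable E].

Lemma mx_sigma_measurable j : (0 < j)%N -> mx_sigma (Ahat j) `<=` measurable.
Proof.
move=> j0; apply: smallest_sub; first exact: sigma_algebra_measurable.
by move=> _ [i [l [B mB <-]]]; exact: Ahat_measurable.
Qed.

Lemma mx_measurable_generated j :
  mx_measurable (T := g_sigma_algebraType (mx_generators (Ahat j))) (Ahat j).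
Proof. by move=> i l _ Y mY; apply: sub_gen_smallest; exists i, l, Y. Qed.

(* A pi-system generating the sigma-algebra of [Ahat 1, ..., Ahat k]. *)
Definition past_events k : set (set T) := [set B | exists E : nat -> set T,
  (forall j, j \in iota 1 k -> mx_sigma (Ahat j) (E j)) /\
  B = \bigcap_(j in [set j | j \in iota 1 k]) E j].

Lemma past_events_measurable k : past_events k `<=` measurable.
Proof.
move=> _ [E [sE ->]]; apply: bigcap_measurableType => j jk.
by apply: mx_sigma_measurable (sE j jk); move: jk; rewrite /= mem_iota => /andP[].
Qed.

Lemma sigma_past_measurable k : <<s past_events k >> `<=` measurable.
Proof.
by apply: smallest_sub; [exact: sigma_algebra_measurable | exact: past_events_measurable].
Qed.

Lemma past_eventsT k : past_events k setT.
Proof.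
exists (fun=> setT); split; last by rewrite bigcapT.
by move=> j _; exact: (@measurableT _ (g_sigma_algebraType (mx_generators (Ahat j)))).
Qed.

Lemma past_events_setI_closed k : setI_closed (past_events k).
Proof.
move=> _ _ [E [sE ->]] [F [sF ->]]; exists (fun j => E j `&` F j); split; last first.
  by rewrite bigcapI.
by move=> j jk; apply: (@measurableI _ (g_sigma_algebraType (mx_generators (Ahat j))));
  [exact: sE | exact: sF].
Qed.

Lemma mx_sigma_sub_past k j : j \in iota 1 k -> mx_sigma (Ahat j) `<=` <<s past_events k >>.
Proof.
move=> jk A sA; apply: sub_gen_smallest.
exists (fun i => if i == j then A else setT); split.
  by move=> i _; case: eqP => [->|_] //; exact: (@measurableT _ (g_sigma_algebraType _)).
apply/seteqP; split => [t At i _|t Et]; first by case: eqP.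
by have := Et j jk; rewrite eqxx.
Qed.

Lemma mx_measurable_past k j : j \in iota 1 k ->
  mx_measurable (T := g_sigma_algebraType (past_events k)) (Ahat j).
Proof.
move=> jk i l _ Y mY.
have gen : mx_sigma (Ahat j) (setT `&` (fun t => Ahat j t i l) @^-1` Y).
  by apply: sub_gen_smallest; exists i, l, Y.
exact: mx_sigma_sub_past jk _ gen.
Qed.

Lemma indep_past_events k A B :
  mx_sigma (Ahat k.+1) A -> past_events k B -> P (A `&` B) = P A * P B.
Proof.
move=> sA [E [sE ->]].
have pos j : j \in iota 1 k -> (0 < j)%N by rewrite mem_iota => /andP[].
have notin_k : k.+1 \notin iota 1 k by rewrite mem_iota add1n ltnn andbF.
pose E' j := if j == k.+1 then A else E j.
have sE' j : j \in k.+1 :: iota 1 k -> mx_sigma (Ahat j) (E' j).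
  by rewrite inE /E'; case: eqP => [-> //|_ /= /sE].
have pos' j : j \in k.+1 :: iota 1 k -> (0 < j)%N.
  by rewrite inE => /predU1P[->|/pos].
have ->: A `&` \bigcap_(j in [set j | j \in iota 1 k]) E j =
    \bigcap_(j in [set j | j \in k.+1 :: iota 1 k]) E' j.
  apply/seteqP; split => [t [At Et] j /=|t Et].
    rewrite inE /E' => /predU1P[->|jk]; first by rewrite eqxx.
    by case: eqP => [jk1|_]; [move: notin_k; rewrite -jk1 jk | exact: Et].
  split; first by have := Et k.+1; rewrite /= mem_head /E' eqxx; apply.
  move=> j jk; have := Et j; rewrite /= inE jk orbT /E'.
  by case: eqP => [jk1|_]; [move: notin_k; rewrite -jk1 jk | apply].
have uniq_s : uniq (k.+1 :: iota 1 k) by rewrite /= notin_k iota_uniq.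
rewrite (Ahat_indep _ E' uniq_s pos' sE') (Ahat_indep _ E (iota_uniq 1 k) pos sE).
rewrite big_cons /E' eqxx.
rewrite EFinM fineK ?fin_num_measure //; last exact: mx_sigma_measurable sA.
congr (_ * (_)%:E); apply: eq_big_seq => j jk.
by case: eqP => [jk1|//]; move: notin_k; rewrite -jk1 jk.
Qed.

Lemma indep_past k A B :
  mx_sigma (Ahat k.+1) A -> <<s past_events k >> B -> P (A `&` B) = P A * P B.
Proof.
move=> sA; apply: indep_event_sigma.
- exact: mx_sigma_measurable sA.
- exact: past_events_measurable.
- exact: past_events_setI_closed.
- exact: past_eventsT.
- by move=> C; exact: indep_past_events.
Qed.

End MatrixIndependence.

Lemma ge0_integral_lincomb {d} {T : measurableType d} {R : realType}
    (mu : {measure set T -> \bar R}) (f g : T -> R) (a b : R) :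
  measurable_fun setT f -> measurable_fun setT g ->
  (forall t, 0 <= f t) -> (forall t, 0 <= g t) -> 0 <= a -> 0 <= b ->
  (\int[mu]_t (a * f t + b * g t)%:E =
   a%:E * \int[mu]_t (f t)%:E + b%:E * \int[mu]_t (g t)%:E)%E.
Proof.
move=> mf mg f0 g0 a0 b0.
have mEaf : measurable_fun setT (fun t => (a * f t)%:E).
  by apply/measurable_EFinP; apply: measurable_funM => //; exact: measurable_cst.
have mEbg : measurable_fun setT (fun t => (b * g t)%:E).
  by apply/measurable_EFinP; apply: measurable_funM => //; exact: measurable_cst.
under eq_integral do rewrite EFinD.
rewrite ge0_integralD // => [|t _|t _]; last 2 first.
- by rewrite lee_fin mulr_ge0.
- by rewrite lee_fin mulr_ge0.
under eq_integral do rewrite EFinM; under [X in (_ + X)%E]eq_integral do rewrite EFinM.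
rewrite !ge0_integralZl_EFin //.
- by move=> t _; rewrite lee_fin.
- exact/measurable_EFinP.
- by move=> t _; rewrite lee_fin.
- exact/measurable_EFinP.
Qed.

Lemma ereal_moment_bounds {R : realType} (x1 x2 : \bar R) (alpha : R) :
  (0 <= x1)%E -> (0 <= x2)%E -> (4%:E * x2 + 2%:E * x1 + 1 <= alpha%:E)%E ->
  [/\ (4%:E * x2 + 2%:E * x1 <= (alpha - 1)%:E)%E, (2%:E * x1 + 1 <= alpha%:E)%E,
      (x2 <= alpha%:E)%E & 1 <= alpha].
Proof.
have mul_pinfty (r : R) : 0 < r -> (r%:E * +oo = +oo)%E.
  by move=> r0; rewrite mulry gtr0_sg // mul1e.
case: x1 x2 => [a1||] [a2||] //= a1_ge0 a2_ge0; rewrite ?mul_pinfty //.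
rewrite -!EFinM -!EFinD !lee_fin in a1_ge0 a2_ge0 * => h.
by split; lra.
Qed.

Lemma ereal_two_step_bound {R : realType} (e : nat -> \bar R) (c alpha : R) :
  1 <= alpha -> 0 <= c -> (forall n, 0 <= e n)%E ->
  (e 0%N <= c%:E)%E -> (e 1%N <= (c * alpha)%:E)%E ->
  (forall n, e n.+2 <= (alpha - 1)%:E * e n.+1 + alpha%:E * e n)%E ->
  forall n, (e n <= (c * alpha ^+ n)%:E)%E.
Proof.
move=> alpha_ge1 c0 e0 e_0 e_1 e_step.
suff pair_bound n : (e n <= (c * alpha ^+ n)%:E)%E /\ (e n.+1 <= (c * alpha ^+ n.+1)%:E)%E.
  by move=> n; case: (pair_bound n).
elim: n => [|n [IH0 IH1]]; first by rewrite expr0 expr1 mulr1.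
split=> //; apply: le_trans (e_step n) _.
have -> : c * alpha ^+ n.+2 = (alpha - 1) * (c * alpha ^+ n.+1) + alpha * (c * alpha ^+ n).
  by rewrite !exprS; ring.
have alpha_ge0 : 0 <= alpha by exact: le_trans ler01 alpha_ge1.
rewrite [leRHS]EFinD !EFinM; apply: leeD; apply: lee_wpmul2l => //.
by rewrite lee_fin subr_ge0.
Qed.

Section ChebyshevExpectation.
Local Open Scope ereal_scope.
Context {R : realType} {D : nat} {d} {T : measurableType d}.
Variables (P : probability T R) (Ahat : nat -> T -> 'M[R]_D).
Hypothesis Ahat_indep : mutually_independent P [set j | (0 < j)%N] Ahat.
Hypothesis Ahat_measurable : forall j, (0 < j)%N -> mx_measurable (Ahat j).

Local Notation sqfrob_cheb n t := (sqfrob (cheb (fun j => Ahat j t) n)).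

Let integral_cst_prob (r : R) : \int[P]_t r%:E = r%:E.
Proof.
rewrite (_ : (fun=> r%:E) = cst r%:E) // integral_cst //.
by rewrite [X in _ * X](probability_setT P) mule1.
Qed.

Lemma expectation_cheb0 : \int[P]_t (sqfrob_cheb 0 t)%:E = D%:R%:E.
Proof. by under eq_integral do rewrite cheb0 sqfrob1; exact: integral_cst_prob. Qed.

Lemma expectation_cheb1_le :
  \int[P]_t (sqfrob_cheb 1 t)%:E <= D%:R%:E * \int[P]_t (opnorm (Ahat 1 t) ^+ 2)%:E.
Proof.
have mop2 : measurable_fun setT (fun t => opnorm (Ahat 1 t) ^+ 2)%R.
  exact/measurable_funX/measurable_opnorm/Ahat_measurable.
rewrite -ge0_integralZl_EFin //; last 2 first.
- by move=> t _; rewrite lee_fin sqr_ge0.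
- exact/measurable_EFinP.
apply: (ge0_le_integral P measurableT).
- by move=> t _; rewrite lee_fin sqfrob_ge0.
- apply/measurable_EFinP/measurable_sqfrob/mx_measurable_cheb => j /andP[j0 _].
  exact: Ahat_measurable.
- by under eq_fun do rewrite -EFinM; apply/measurable_EFinP/measurable_funM => //;
    exact: measurable_cst.
- by move=> t _; rewrite -EFinM lee_fin cheb1 sqfrob_le_opnorm.
Qed.

Lemma integralM_indep_past k
    (X : g_sigma_algebraType (mx_generators (Ahat k.+1)) -> R)
    (Y : g_sigma_algebraType (past_events Ahat k) -> R) :
  measurable_fun setT X -> measurable_fun setT Y ->
  (forall t, 0 <= X t)%R -> (forall t, 0 <= Y t)%R ->
  \int[P]_t (X t * Y t)%:E = \int[P]_t (X t)%:E * \int[P]_t (Y t)%:E.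
Proof.
move=> mX mY X0 Y0; under eq_integral do rewrite EFinM.
apply: (@ge0_integralM_indep _ _ _ P (mx_generators (Ahat k.+1)) (past_events Ahat k)).
- exact: mx_sigma_measurable.
- exact: sigma_past_measurable.
- by move=> A B; exact: indep_past.
- exact/measurable_EFinP.
- exact/measurable_EFinP.
- by move=> t; rewrite lee_fin.
- by move=> t; rewrite lee_fin.
Qed.

Lemma measurable_sqfrob_cheb_past {k n : nat} : (n <= k)%N ->
  measurable_fun setT
    (fun t : g_sigma_algebraType (past_events Ahat k) => sqfrob_cheb n t).
Proof.
move=> nk; apply/measurable_sqfrob/mx_measurable_cheb => j /andP[j0 jn].
by apply: mx_measurable_past; rewrite mem_iota j0 add1n ltnS (leq_trans jn).
Qed.

Lemma expectation_chebSS_le_indep n :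
  \int[P]_t (sqfrob_cheb n.+2 t)%:E <=
  \int[P]_t (4 * opnorm (Ahat n.+2 t) ^+ 2 + 2 * opnorm (Ahat n.+2 t))%:E *
    \int[P]_t (sqfrob_cheb n.+1 t)%:E +
  \int[P]_t (2 * opnorm (Ahat n.+2 t) + 1)%:E * \int[P]_t (sqfrob_cheb n t)%:E.
Proof.
pose a t := opnorm (Ahat n.+2 t).
have a0 t : (0 <= a t)%R by exact: opnorm_ge0.
have mcoef d' (U : measurableType d') (b : U -> R) : measurable_fun setT b ->
    measurable_fun setT (fun t => 4 * b t ^+ 2 + 2 * b t)%R /\
    measurable_fun setT (fun t => 2 * b t + 1)%R.
  move=> mb; split; apply: measurable_funD; try exact: measurable_cst;
    apply: measurable_funM => //; try exact: measurable_cst; exact: measurable_funX.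
have [mX1 mX2] := mcoef _ (g_sigma_algebraType (mx_generators (Ahat n.+2))) a
  (measurable_opnorm _ (mx_measurable_generated Ahat n.+2)).
have [mX1T mX2T] := mcoef _ T a (measurable_opnorm _ (Ahat_measurable _ (ltn0Sn n.+1))).
have mY1 := measurable_sqfrob_cheb_past (leqnn n.+1).
have mY0 := measurable_sqfrob_cheb_past (leqnSn n).
have mYT m : measurable_fun setT (fun t => sqfrob_cheb m t).
  by apply/measurable_sqfrob/mx_measurable_cheb => j /andP[j0 _]; exact: Ahat_measurable.
have X1_ge0 t : (0 <= 4 * a t ^+ 2 + 2 * a t)%R by rewrite addr_ge0 ?mulr_ge0.
have X2_ge0 t : (0 <= 2 * a t + 1)%R by rewrite addr_ge0 ?mulr_ge0.
rewrite -(integralM_indep_past _ _ _ mX1 mY1 X1_ge0 (fun t => sqfrob_ge0 _)).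
rewrite -(integralM_indep_past _ _ _ mX2 mY0 X2_ge0 (fun t => sqfrob_ge0 _)).
have mX1Y1 : measurable_fun setT (fun t => ((4 * a t ^+ 2 + 2 * a t) * sqfrob_cheb n.+1 t)%:E).
  by apply/measurable_EFinP; exact: measurable_funM.
have mX2Y0 : measurable_fun setT (fun t => ((2 * a t + 1) * sqfrob_cheb n t)%:E).
  by apply/measurable_EFinP; exact: measurable_funM.
rewrite -ge0_integralD //.
- apply: (ge0_le_integral P measurableT).
  + by move=> t _; rewrite lee_fin sqfrob_ge0.
  + exact/measurable_EFinP.
  + exact: emeasurable_funD.
  + by move=> t _; rewrite -EFinD lee_fin chebSS sqfrob_cheb_step.
- by move=> t _; rewrite lee_fin mulr_ge0 ?sqfrob_ge0.
- by move=> t _; rewrite lee_fin mulr_ge0 ?sqfrob_ge0.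
Qed.

Lemma expectation_chebSS_le n :
  \int[P]_t (sqfrob_cheb n.+2 t)%:E <=
  (4%:E * \int[P]_t (opnorm (Ahat n.+2 t) ^+ 2)%:E +
   2%:E * \int[P]_t (opnorm (Ahat n.+2 t))%:E) * \int[P]_t (sqfrob_cheb n.+1 t)%:E +
  (2%:E * \int[P]_t (opnorm (Ahat n.+2 t))%:E + 1) * \int[P]_t (sqfrob_cheb n t)%:E.
Proof.
pose a t := opnorm (Ahat n.+2 t).
have a0 t : (0 <= a t)%R by exact: opnorm_ge0.
have ma : measurable_fun setT a by apply: measurable_opnorm; exact: Ahat_measurable.
have := expectation_chebSS_le_indep n.
have lin := ge0_integral_lincomb P (fun t => a t ^+ 2)%R a 4 2; rewrite /= in lin.
rewrite lin //; last 2 first.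
- exact: measurable_funX.
- by move=> t; exact: sqr_ge0.
rewrite (_ : \int[P]_t (2 * a t + 1)%:E = 2%:E * \int[P]_t (a t)%:E + 1) //.
have a2_ge0 t : [set: T] t -> 0 <= 2%:E * (a t)%:E by rewrite lee_fin mulr_ge0.
have m2a : measurable_fun setT (fun t => 2%:E * (a t)%:E).
  by under eq_fun do rewrite -EFinM; apply/measurable_EFinP/measurable_funM => //;
    exact: measurable_cst.
under eq_integral do rewrite EFinD EFinM.
rewrite ge0_integralD // ge0_integralZl_EFin ?integral_cst_prob //.
- by move=> t _; rewrite lee_fin.
- exact/measurable_EFinP.
Qed.

End ChebyshevExpectation.

Theorem mainTheorem3 (R : realType) (D : nat) (d : measure_display)
    (T : measurableType d) (P : probability T R)
    (A : 'M[R]_D) (Ahat : nat -> T -> 'M[R]_D) (alpha : R) :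
  A^T = A ->
  mutually_independent P [set j | (0 < j)%N] Ahat ->
  (forall j, (0 < j)%N -> forall i l : 'I_D,
      P.-integrable setT (fun t => (Ahat j t i l)%:E) /\
      (\int[P]_t (Ahat j t i l)%:E = (A i l)%:E)%E) ->
  (forall k, (0 < k)%N ->
      (4%:E * \int[P]_t ((opnorm (Ahat k t)) ^+ 2)%:E
       + 2%:E * \int[P]_t (opnorm (Ahat k t))%:E + 1 <= alpha%:E)%E) ->
  forall k : nat,
    (\int[P]_t ((frobnorm (cheb (fun j => Ahat j t) k)) ^+ 2)%:E
     <= (D%:R * alpha ^+ k)%:E)%E.
Proof.
move=> _ Ahat_indep Ahat_int Ahat_moments k.
have Ahat_meas j : (0 < j)%N -> mx_measurable (Ahat j).
  by move=> j0 i l; apply/measurable_EFinP; exact: measurable_int (Ahat_int j j0 i l).1.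
have moments j (j0 : (0 < j)%N) := ereal_moment_bounds _ _ _
  (integral_ge0 _ (fun t _ => opnorm_ge0 (Ahat j t) : (0 <= (opnorm (Ahat j t))%:E)%E))
  (integral_ge0 _ (fun t _ => sqr_ge0 (opnorm (Ahat j t)) : (0 <= (opnorm (Ahat j t) ^+ 2)%:E)%E))
  (Ahat_moments j j0).
have [_ _ moment2_le alpha_ge1] := moments 1%N isT.
pose e n := (\int[P]_t (sqfrob (cheb (fun j => Ahat j t) n))%:E)%E.
under eq_integral do rewrite sqr_frobnorm.
rewrite -/(e k); move: k; apply: ereal_two_step_bound => // [n|||n].
- by apply: integral_ge0 => t _; rewrite lee_fin sqfrob_ge0.
- by rewrite /e expectation_cheb0.
- apply: le_trans (expectation_cheb1_le _ _ Ahat_meas) _.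
  by rewrite EFinM lee_wpmul2l.
- have [coef1_le coef2_le _ _] := moments n.+2 isT.
  apply: le_trans (expectation_chebSS_le _ _ Ahat_indep Ahat_meas n) _.
  by apply: leeD; apply: lee_wpmul2r => //; apply: integral_ge0 => t _;
    rewrite lee_fin sqfrob_ge0.
Qed.
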